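(* Let $G$ be a finite group and $H$ a subgroup of $G$ with $[G:H]>2$. Then the set $$f_{G-H}=\bigcup_{\substack{g,h\in G\\ g,\,h,\,g^{-1}h\in G-H}}\{\{a,ag,ah\}\mid a\in G\}\subseteq\binom{G}{3}$$ is the set of bases of a rank-$3$ matroid on the ground set $G$ (invariant under left multiplication by $G$); equivalently it corresponds to a three-dimensional tropical subrepresentation of the boolean regular representation $\mathbb{B}[G]$.
   Context: $G$ acts on $\binom{G}{3}$ (3-element subsets of $G$) by $x\cdot\{a,b,c\}=\{xa,xb,xc\}$; the sets $\{\{a,ag,ah\}\mid a\in G\}$ for $e,g,h$ pairwise distinct are the orbits. Three-dimensional tropical subrepresentations of $\mathbb{B}[G]$ (free module over the boolean semifield with basis indexed by $G$, $G$ acting by left multiplication) are equivalent to rank-3 matroids on ground set $G$ with basis set invariant under this action. *)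

From mathcomp Require Import all_boot all_fingroup.
Set Implicit Arguments.
Unset Strict Implicit.
Unset Printing Implicit Defensive.
Import GroupScope.
Local Open Scope group_scope.

Definition is_matroid_bases (T : finType) (E : {set T}) (Bs : {set {set T}}) : Prop :=
  [/\ Bs != set0,
      (forall B, B \in Bs -> B \subset E) &
      (forall B1 B2, B1 \in Bs -> B2 \in Bs -> forall x, x \in B1 :\: B2 ->
         exists2 y, y \in B2 :\: B1 & (y |: (B1 :\ x)) \in Bs)].

Definition is_rank_matroid_bases (T : finType) (r : nat) (E : {set T})
    (Bs : {set {set T}}) : Prop :=
  is_matroid_bases E Bs /\ (forall B, B \in Bs -> #|B| = r).

Definition left_invariant (gT : finGroupType) (G : {set gT}) (Bs : {set {set gT}}) : Prop :=
  forall x B, x \in G -> B \in Bs -> [set x * b | b in B] \in Bs.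

Definition fGH (gT : finGroupType) (G H : {set gT}) : {set {set gT}} :=
  [set B : {set gT} | [exists a in G, exists g in G :\: H, exists h in G :\: H,
     (g^-1 * h \notin H) && (B == [set a; a * g; a * h])]].

(* A triple {a, a g, a h} lies in f_{G-H} exactly when a, a g, a h lie in three
   pairwise distinct left cosets of H, so f_{G-H} is the family of transversals
   of three distinct left cosets, which is visibly invariant under left
   multiplication.  For basis exchange, take x in B1 = {x, p, q} and x outside
   B2: the three elements of B2 lie in three distinct cosets, while p and q
   occupy at most two, so some y in B2 avoids the cosets of p and q, and then
   {y, p, q} is again a basis.  Index at least 3 provides a first basis. *)

From mathcomp Require Import all_boot all_fingroup.
Import GroupScope.
Set Implicit Arguments.
Unset Strict Implicit.

Lemma card_set3 (T : finType) (a b c : T) :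
  a != b -> a != c -> b != c -> #|[set a; b; c]| = 3.
Proof.
move=> ab ac bc.
by rewrite -setUA cardsU1 cardsU1 cards1 !inE negb_or ab ac bc.
Qed.

Lemma set3C12 (T : finType) (a b c : T) : [set a; b; c] = [set b; a; c].
Proof. by apply/setP => z; rewrite !inE; case: (z == a); case: (z == b). Qed.

Lemma set3C13 (T : finType) (a b c : T) : [set a; b; c] = [set c; b; a].
Proof.
by apply/setP => z; rewrite !inE; case: (z == a); case: (z == b); case: (z == c).
Qed.

Section LeftCosets.
Variables (gT : finGroupType) (H : {group gT}).

Definition same_lcoset (u v : gT) := u^-1 * v \in H.

Lemma same_lcoset_refl u : same_lcoset u u.
Proof. by rewrite /same_lcoset mulVg group1. Qed.

Lemma same_lcosetC u v : same_lcoset u v = same_lcoset v u.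
Proof. by rewrite /same_lcoset -groupV invMg invgK. Qed.

Lemma same_lcoset_trans v u w :
  same_lcoset u v -> same_lcoset v w -> same_lcoset u w.
Proof.
rewrite /same_lcoset => uv vw.
by rewrite -(mulKVg v w) mulgA groupM.
Qed.

Lemma same_lcosetMl x u v : same_lcoset (x * u) (x * v) = same_lcoset u v.
Proof. by rewrite /same_lcoset invMg -mulgA mulKg. Qed.

Lemma diff_lcoset_neq u v : ~~ same_lcoset u v -> u != v.
Proof. by apply: contraNneq => ->; apply: same_lcoset_refl. Qed.

Definition distinct_lcosets (a b c : gT) :=
  [&& ~~ same_lcoset a b, ~~ same_lcoset a c & ~~ same_lcoset b c].

Lemma distinct_lcosetsC12 a b c :
  distinct_lcosets a b c = distinct_lcosets b a c.
Proof.
rewrite /distinct_lcosets (same_lcosetC b a).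
by case: (same_lcoset a b); case: (same_lcoset a c); case: (same_lcoset b c).
Qed.

Lemma distinct_lcosetsC13 a b c :
  distinct_lcosets a b c = distinct_lcosets c b a.
Proof.
rewrite /distinct_lcosets (same_lcosetC c b) (same_lcosetC c a) (same_lcosetC b a).
by case: (same_lcoset a b); case: (same_lcoset a c); case: (same_lcoset b c).
Qed.

Lemma distinct_lcosetsMl x a b c :
  distinct_lcosets (x * a) (x * b) (x * c) = distinct_lcosets a b c.
Proof. by rewrite /distinct_lcosets !same_lcosetMl. Qed.

Lemma card_distinct_lcosets a b c :
  distinct_lcosets a b c -> #|[set a; b; c]| = 3.
Proof.
by case/and3P => /diff_lcoset_neq ab /diff_lcoset_neq ac /diff_lcoset_neq bc;
  apply: card_set3.
Qed.

Lemma distinct_lcosets_avoid2 a b c p q : distinct_lcosets a b c ->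
  exists2 y, y \in [set a; b; c] & ~~ same_lcoset y p && ~~ same_lcoset y q.
Proof.
case/and3P => ab ac bc.
have meet_same u v r : same_lcoset u r -> same_lcoset v r -> same_lcoset u v.
  by move=> ur; rewrite same_lcosetC; apply: same_lcoset_trans.
have [ha | ha] := boolP (~~ same_lcoset a p && ~~ same_lcoset a q).
  by exists a; rewrite ?inE ?eqxx.
have [hb | hb] := boolP (~~ same_lcoset b p && ~~ same_lcoset b q).
  by exists b; rewrite ?inE ?eqxx ?orbT.
exists c; first by rewrite !inE eqxx orbT.
move: ha hb; rewrite !negb_and !negbK.
by case/orP=> ha; case/orP=> hb; apply/andP; split; apply/negP => hc;
  do [ by move: ab; rewrite (meet_same _ _ _ ha hb)
     | by move: ac; rewrite (meet_same _ _ _ ha hc)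
     | by move: bc; rewrite (meet_same _ _ _ hb hc) ].
Qed.

Variable G : {group gT}.

Lemma fGHP B :
  reflect (exists a b c, [/\ [&& a \in G, b \in G & c \in G],
                             distinct_lcosets a b c & B = [set a; b; c]])
          (B \in fGH G H).
Proof.
rewrite inE; apply: (iffP idP).
  case/exists_inP => a aG /exists_inP [g /setDP [gG gH]].
  case/exists_inP => h /setDP [hG hH] /andP [gh /eqP ->].
  exists a, (a * g), (a * h); split => //; first by rewrite aG !groupM.
  by rewrite /distinct_lcosets /same_lcoset !mulKg invMg -mulgA mulKg gH hH.
case=> a [b [c [/and3P [aG bG cG] /and3P [ab ac bc] ->]]].
apply/exists_inP; exists a => //.
apply/exists_inP; exists (a^-1 * b); first by rewrite inE ab groupM ?groupV.
apply/exists_inP; exists (a^-1 * c); first by rewrite inE ac groupM ?groupV.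
by rewrite invMg invgK -mulgA !mulKVg bc eqxx.
Qed.

Lemma fGH_pivot B x : B \in fGH G H -> x \in B ->
  exists p q, [/\ [&& x \in G, p \in G & q \in G],
                  distinct_lcosets x p q & B = [set x; p; q]].
Proof.
case/fGHP=> a [b [c [/and3P [aG bG cG] abc ->]]].
rewrite !inE => /orP [/orP [] | ] /eqP ->.
- by exists b, c; rewrite aG bG cG.
- by exists a, c; rewrite aG bG cG -distinct_lcosetsC12 set3C12.
- by exists b, a; rewrite aG bG cG -distinct_lcosetsC13 set3C13.
Qed.

Lemma fGH_exchange B1 B2 : B1 \in fGH G H -> B2 \in fGH G H ->
  forall x, x \in B1 :\: B2 ->
  exists2 y, y \in B2 :\: B1 & (y |: (B1 :\ x)) \in fGH G H.
Proof.
move=> fB1 /fGHP [a [b [c [/and3P [aG bG cG] abc defB2]]]] x /setDP [xB1 xB2].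
have [p [q [/and3P [_ pG qG] /and3P [xp xq pq] defB1]]] := fGH_pivot fB1 xB1.
have [y yB2 /andP [yp yq]] := distinct_lcosets_avoid2 p q abc.
have yG : y \in G.
  by move: yB2; rewrite !inE => /orP [/orP [] | ] /eqP ->.
rewrite -defB2 in yB2; exists y.
  rewrite inE yB2 defB1 !inE !negb_or (diff_lcoset_neq yp) (diff_lcoset_neq yq).
  by rewrite !andbT; apply: contraNneq xB2 => <-.
apply/fGHP; exists y, p, q; split; first by rewrite yG pG qG.
  by rewrite /distinct_lcosets yp yq pq.
apply/setP => z; rewrite defB1 !inE.
have [-> | _] := eqVneq z x; last by rewrite orbA.
by rewrite (negPf (diff_lcoset_neq xp)) (negPf (diff_lcoset_neq xq)) !orbF.
Qed.

Lemma fGH_left_invariant : left_invariant G (fGH G H).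
Proof.
move=> x B xG /fGHP [a [b [c [/and3P [aG bG cG] abc ->]]]].
apply/fGHP; exists (x * a), (x * b), (x * c); split.
- by rewrite !groupM.
- by rewrite distinct_lcosetsMl.
- by rewrite !imsetU !imset_set1.
Qed.

Lemma fGH_sub B : B \in fGH G H -> B \subset G.
Proof.
case/fGHP=> a [b [c [/and3P [aG bG cG] _ ->]]].
by apply/subsetP => z; rewrite !inE => /orP [/orP [] | ] /eqP ->.
Qed.

Lemma card_fGH B : B \in fGH G H -> #|B| = 3.
Proof. by case/fGHP=> a [b [c [_ abc ->]]]; apply: card_distinct_lcosets. Qed.

(* H and g H cover at most 2 #|H| < #|G| elements, so a third coset exists. *)
Lemma fGH_neq0 : H \subset G -> 2 < #|G : H| -> fGH G H != set0.
Proof.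
move=> sHG idx; have H_gt0 := cardG_gt0 H.
have three_cosets : #|H| * 3 <= #|G| by rewrite -(Lagrange sHG) leq_pmul2l.
have /set0Pn [g /setDP [gG gH]] : G :\: H != set0.
  rewrite setD_eq0; apply/negP => /subset_leq_card /(leq_trans three_cosets).
  by rewrite -{2}(muln1 #|H|) leq_pmul2l.
have /set0Pn [h /setDP [hG]] : G :\: (H :|: g *: H) != set0.
  rewrite setD_eq0; apply/negP => /subset_leq_card /(leq_trans three_cosets).
  move/leq_trans/(_ (leq_card_setU H (g *: H))).
  by rewrite card_lcoset addnn -muln2 leq_pmul2l.
rewrite inE negb_or mem_lcoset => /andP [hH ghH].
apply/set0Pn; exists [set 1; g; h]; apply/fGHP; exists 1, g, h; split => //.
  by rewrite group1 gG hG.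
by rewrite /distinct_lcosets /same_lcoset invg1 !mul1g gH hH ghH.
Qed.

End LeftCosets.

Theorem mainTheorem11 (gT : finGroupType) (G H : {group gT}) :
  H \subset G -> (2 < #|G : H|)%N ->
  is_rank_matroid_bases 3 G (fGH G H) /\ left_invariant G (fGH G H).
Proof.
move=> sHG idx; split; last exact: fGH_left_invariant.
split; last exact: card_fGH.
split; [exact: fGH_neq0 | exact: fGH_sub | exact: fGH_exchange].
Qed.
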